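(* There exists $(X_1,\dots,X_5)\in M'_5$, with $X_j=\begin{bmatrix}A_j\\ B_j\end{bmatrix}$ where $A_j,B_j\in\mathbb M^{2\times 2}$, and there exist real constants $c_1,\dots,c_5$ and $d_1,\dots,d_5$ such that \[ c_i-c_j+d_i\det(A_i-A_j)+\langle A_i-A_j,\,B_iJ\rangle<0\qquad\text{for all } i\neq j,\ i,j\in\{1,\dots,5\}. \]
   Context: $\mathbb M^{m\times n}$ is the space of real $m\times n$ matrices; $\langle\cdot,\cdot\rangle$ is the Frobenius inner product on $\mathbb M^{2\times 2}$, and $J=\begin{pmatrix}0&-1\\1&0\end{pmatrix}$. For $N\ge 3$, an $N$-tuple $(X_1,\dots,X_N)$ in $\mathbb M^{4\times 2}$ is a $T_N$-configuration if there exist $P\in\mathbb M^{4\times 2}$, rank-one matrices $C_1,\dots,C_N\in\mathbb M^{4\times 2}$ with $\sum_{j=1}^N C_j=0$, and numbers $\kappa_1,\dots,\kappa_N>1$ such that $X_j=P+C_1+\dots+C_{j-1}+\kappa_jC_j$ for $j=1,\dots,N$. $M'_N$ denotes the set of $T_N$-configurations in $\mathbb M^{4\times 2}$ whose rank-one matrices have the form $C_j=\begin{pmatrix}p_j\\ (\alpha_j\cdot\delta)q_j\end{pmatrix}\otimes\alpha_j$ (here $\begin{pmatrix}p_j\\ (\alpha_j\cdot\delta)q_j\end{pmatrix}\in\mathbb R^4$), where $p_j,q_j,\alpha_j,\delta\in\mathbb R^2$, $\alpha_j\ne 0$, at least three of the $\alpha_j$ are mutually non-collinear, and $\sum_{j=1}^N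 p_j\otimes\alpha_j=0$, $\sum_{j=1}^N q_j\otimes\alpha_j\otimes\alpha_j=0$. For $X\in\mathbb M^{4\times 2}$ we write $X=\begin{bmatrix}A\\ B\end{bmatrix}$ with $A$ the first two rows and $B$ the last two rows. *)

From HB Require Import structures.
From mathcomp Require Import all_boot all_order all_algebra.
From mathcomp Require Import Rstruct.
Set Implicit Arguments. Unset Strict Implicit. Unset Printing Implicit Defensive.
Import Order.TTheory GRing.Theory Num.Theory.
Local Open Scope ring_scope.

Section Defs.
Variable R : realFieldType.

Definition mat42 := 'M[R]_(2 + 2, 2).

Definition blockA (X : mat42) : 'M[R]_2 := usubmx X.
Definition blockB (X : mat42) : 'M[R]_2 := dsubmx X.

Definition frob (A B : 'M[R]_2) : R := \tr (A^T *m B).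

Definition Jmx : 'M[R]_2 :=
  \matrix_(i < 2, j < 2)
    (if (i == 0 :> nat) && (j == 1 :> nat) then -1
     else if (i == 1 :> nat) && (j == 0 :> nat) then 1 else 0).

Definition dot2 (u v : 'cV[R]_2) : R := \sum_(k < 2) u k 0 * v k 0.

Definition collinear (u v : 'cV[R]_2) : Prop := (\rank (row_mx u v) <= 1)%N.

Definition TN_config_with (N : nat) (X : 'I_N -> mat42)
    (P : mat42) (C : 'I_N -> mat42) (kappa : 'I_N -> R) : Prop :=
  [/\ (3 <= N)%N,
      (forall j, \rank (C j) = 1%N),
      \sum_(j < N) C j = 0,
      (forall j, 1 < kappa j) &
      (forall j : 'I_N,
          X j = P + \sum_(i < N | (i < j)%N) C i + kappa j *: C j)].

Definition TN_config (N : nat) (X : 'I_N -> mat42) : Prop :=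
  exists P C kappa, @TN_config_with N X P C kappa.

(* The set M'_N. The rank-one matrix C_j = (p_j ; (alpha_j . delta) q_j) (x) alpha_j
   is represented as the 4x2 matrix  col_mx p_j ((alpha_j.delta) q_j) *m alpha_j^T. *)
Definition in_Mprime (N : nat) (X : 'I_N -> mat42) : Prop :=
  exists (P : mat42) (C : 'I_N -> mat42) (kappa : 'I_N -> R)
         (p q alpha : 'I_N -> 'cV[R]_2) (delta : 'cV[R]_2),
  @TN_config_with N X P C kappa /\
  [/\
      (forall j, C j = col_mx (p j) (dot2 (alpha j) delta *: q j) *m (alpha j)^T),
      (forall j, alpha j != 0),
      (exists i j k : 'I_N,
          [/\ i != j, j != k, i != k &
            [/\ ~ collinear (alpha i) (alpha j),
              ~ collinear (alpha j) (alpha k) &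
              ~ collinear (alpha i) (alpha k)]]),
      \sum_(j < N) p j *m (alpha j)^T = 0 &
      (forall a b c : 'I_2,
          \sum_(j < N) q j a 0 * alpha j b 0 * alpha j c 0 = 0)].

End Defs.

From mathcomp Require Import all_boot all_order all_algebra.
From mathcomp Require Import Rstruct.
From mathcomp Require Import ring lra.
Import Order.TTheory GRing.Theory Num.Theory.
Set Implicit Arguments. Unset Strict Implicit. Unset Printing Implicit Defensive.
Local Open Scope ring_scope.

(* Taking P = 0 and C_j = (p_j ; (alpha_j.delta) q_j) alpha_j^T,
   the two moment conditions defining M'_N are exactly what makes the C_j sum to zero,
   so any data satisfying them (with p_j, alpha_j nonzero and kappa_j > 1) yields a
   point of M'_N.  For explicit such data on five directions alpha_j, three of them
   pairwise independent, the blocks A_j, B_j of X_j are computed entrywise, after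
   which the twenty strict inequalities are numerical facts. *)

Lemma sum_ord2 (V : nmodType) (F : 'I_2 -> V) : \sum_(i < 2) F i = F 0 + F 1.
Proof. by rewrite big_ord_recl big_ord1; congr (F _ + F _); apply: val_inj. Qed.

Lemma det_mx22 (R : comNzRingType) (M : 'M[R]_2) :
  \det M = M 0 0 * M 1 1 - M 0 1 * M 1 0.
Proof.
rewrite (expand_det_row _ 0) sum_ord2 /cofactor !det_mx11 !mxE /=.
have lift00 : lift 0 0 = 1 :> 'I_2 by apply: val_inj.
have lift10 : lift 1 0 = 0 :> 'I_2 by apply: val_inj.
by rewrite lift00 lift10 expr0 expr1 mul1r mulN1r mulrN.
Qed.

Lemma rank_outer (F : fieldType) m n (u : 'cV[F]_m) (v : 'cV[F]_n) :
  v != 0 -> \rank (u *m v^T) = (u != 0).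
Proof.
move=> v_nz; rewrite mxrankMfree; last by rewrite /row_free rank_rV trmx_eq0 v_nz.
by rewrite -mxrank_tr rank_rV trmx_eq0.
Qed.

Lemma noncollinear_det (R : realFieldType) (u v : 'cV[R]_2) :
  u 0 0 * v 1 0 != u 1 0 * v 0 0 -> ~ collinear u v.
Proof.
move=> det_nz; rewrite /collinear.
suff /mxrank_unit -> : row_mx u v \in unitmx by [].
rewrite unitmxE unitfE det_mx22 subr_eq0.
have uE i : row_mx u v i 0 = u i 0.
  by rewrite -[RHS](row_mxEl u v); congr (row_mx u v i _); apply: val_inj.
have vE i : row_mx u v i 1 = v i 0.
  by rewrite -[RHS](row_mxEr u v); congr (row_mx u v i _); apply: val_inj.
by rewrite !uE !vE [v 0 0 * _]mulrC.
Qed.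

Lemma frob_mulmxJ (R : realFieldType) (A B : 'M[R]_2) :
  frob A (B *m Jmx R) = A 0 0 * B 0 1 - A 0 1 * B 0 0 + A 1 0 * B 1 1 - A 1 1 * B 1 0.
Proof. by rewrite /frob /mxtrace !sum_ord2 !mxE !sum_ord2 !mxE !sum_ord2 !mxE /=; ring. Qed.

Definition tn_point (R : realFieldType) N (P : mat42 R) (C : 'I_N -> mat42 R)
    (kappa : 'I_N -> R) (j : 'I_N) : mat42 R :=
  P + \sum_(i < N | (i < j)%N) C i + kappa j *: C j.

Lemma tn_pointE (R : realFieldType) N P C kappa (j : 'I_N) a b :
  @tn_point R N P C kappa j a b =
  P a b + \sum_(i < N | (i < j)%N) C i a b + kappa j * C j a b.
Proof. by rewrite !mxE summxE. Qed.

Section MprimeOfData.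

Variables (R : realFieldType) (N : nat).
Variables (p q alpha : 'I_N -> 'cV[R]_2) (delta : 'cV[R]_2).

Definition mprime_dir (j : 'I_N) : mat42 R :=
  col_mx (p j) (dot2 (alpha j) delta *: q j) *m (alpha j)^T.

Lemma mprime_dirEu j a b : mprime_dir j (lshift 2 a) b = p j a 0 * alpha j b 0.
Proof. by rewrite !mxE big_ord1 col_mxEu !mxE. Qed.

Lemma mprime_dirEd j a b :
  mprime_dir j (rshift 2 a) b = dot2 (alpha j) delta * q j a 0 * alpha j b 0.
Proof. by rewrite !mxE big_ord1 col_mxEd !mxE. Qed.

Lemma rank_mprime_dir j : alpha j != 0 -> p j != 0 -> \rank (mprime_dir j) = 1%N.
Proof. by move=> alpha_nz p_nz; rewrite rank_outer // col_mx_eq0 negb_and p_nz. Qed.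

Lemma sum_mprime_dir :
  \sum_j p j *m (alpha j)^T = 0 ->
  (forall a b c : 'I_2, \sum_j q j a 0 * alpha j b 0 * alpha j c 0 = 0) ->
  \sum_j mprime_dir j = 0.
Proof.
move=> /matrixP sum_p sum_q; apply/matrixP => i b; rewrite summxE mxE.
rewrite -(splitK i); case: (split i) => a /=.
  under eq_bigr do rewrite mprime_dirEu.
  transitivity ((\sum_j p j *m (alpha j)^T) a b); last by rewrite sum_p mxE.
  rewrite summxE; apply: eq_bigr => j _.
  by rewrite !mxE big_ord1 !mxE.
(* The lower block is \sum_k delta_k \sum_j (q_j)_a (alpha_j)_k (alpha_j)_b. *)
under eq_bigr do rewrite mprime_dirEd /dot2 big_distrl big_distrl /=.
rewrite exchange_big big1 // => k _.
transitivity (delta k 0 * \sum_j q j a 0 * alpha j k 0 * alpha j b 0).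
  by rewrite big_distrr; apply: eq_bigr => j _ /=; ring.
by rewrite sum_q mulr0.
Qed.

Lemma in_Mprime_tn_point (P : mat42 R) (kappa : 'I_N -> R) :
  (3 <= N)%N -> (forall j, 1 < kappa j) ->
  (forall j, alpha j != 0) -> (forall j, p j != 0) ->
  (exists i j k : 'I_N,
      [/\ i != j, j != k, i != k &
        [/\ ~ collinear (alpha i) (alpha j),
          ~ collinear (alpha j) (alpha k) &
          ~ collinear (alpha i) (alpha k)]]) ->
  \sum_j p j *m (alpha j)^T = 0 ->
  (forall a b c : 'I_2, \sum_j q j a 0 * alpha j b 0 * alpha j c 0 = 0) ->
  in_Mprime (tn_point P mprime_dir kappa).
Proof.
move=> N_ge3 kappa_gt1 alpha_nz p_nz noncol sum_p sum_q.
exists P, mprime_dir, kappa, p, q, alpha, delta; split; last by [].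
split=> //; first by move=> j; apply: rank_mprime_dir.
exact: sum_mprime_dir.
Qed.

End MprimeOfData.

Section Witness.

Variable R : realFieldType.

Definition vec2 (a b : R) : 'cV[R]_2 := \col_i nth 0 [:: a; b] i.
Definition mx2 (a b c d : R) : 'M[R]_2 :=
  \matrix_(i, j) nth 0 (nth [::] [:: [:: a; b]; [:: c; d]] i) j.

Definition alpha5 (k : 'I_5) : 'cV[R]_2 :=
  nth 0 [:: vec2 1 0; vec2 0 1; vec2 1 1; vec2 1 (-1); vec2 1 2] k.
Definition delta5 : 'cV[R]_2 := vec2 0 (3/2).
Definition p5 (k : 'I_5) : 'cV[R]_2 :=
  nth 0 [:: vec2 (-5/2) (-2); vec2 (-1/2) (-3/2); vec2 (3/2) (-1/2); vec2 1 1;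
            vec2 0 (3/2)] k.
Definition q5 (k : 'I_5) : 'cV[R]_2 :=
  nth 0 [:: vec2 (3/2) 2; vec2 (-3) (-4); vec2 (-3) (-4); 0; vec2 (3/2) 2] k.
Definition kappa5 (k : 'I_5) : R := nth 0 [:: 4; 3/2; 5; 5/2; 2] k.

Definition X5 : 'I_5 -> mat42 R :=
  tn_point 0 (mprime_dir p5 q5 alpha5 delta5) kappa5.

Definition A5 (k : 'I_5) : 'M[R]_2 :=
  nth 0 [:: mx2 (-10) 0 (-8) 0; mx2 (-5/2) (-3/4) (-2) (-9/4); mx2 5 7 (-9/2) (-4);
            mx2 (3/2) (-3/2) 0 (-9/2); mx2 0 0 (3/2) 3] k.
Definition B5 (k : 'I_5) : 'M[R]_2 :=
  nth 0 [:: 0; mx2 0 (-27/4) 0 (-9); mx2 (-45/2) (-27) (-30) (-36);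
            mx2 (-9/2) (-9) (-6) (-12); mx2 (9/2) 9 6 12] k.

Definition c5 (k : 'I_5) : R := nth 0 [:: 0; -7/2; 117/8; 131/2; 35/2] k.
Definition d5 (k : 'I_5) : R := nth 0 [:: 1/2; -23/8; -45/8; 1/4; -55/8] k.

Lemma kappa5_gt1 k : 1 < kappa5 k.
Proof. by case: k => [[|[|[|[|[|//]]]]] ?]; rewrite /kappa5 /=; lra. Qed.

Lemma alpha5_neq0 k : alpha5 k != 0.
Proof.
apply/negP => /eqP/matrixP alpha_0; move: (alpha_0 0 0) (alpha_0 1 0).
by case: k {alpha_0} => [[|[|[|[|[|//]]]]] ?]; rewrite /alpha5 /= !mxE /=; lra.
Qed.

Lemma p5_neq0 k : p5 k != 0.
Proof.
apply/negP => /eqP/matrixP p_0; move: (p_0 0 0) (p_0 1 0).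
by case: k {p_0} => [[|[|[|[|[|//]]]]] ?]; rewrite /p5 /= !mxE /=; lra.
Qed.

Lemma alpha5_noncollinear :
  exists i j k : 'I_5,
    [/\ i != j, j != k, i != k &
      [/\ ~ collinear (alpha5 i) (alpha5 j),
        ~ collinear (alpha5 j) (alpha5 k) &
        ~ collinear (alpha5 i) (alpha5 k)]].
Proof.
exists 0, 1, 2%:R; split=> //; split; apply: noncollinear_det; rewrite /alpha5 /= !mxE /=;
  apply/eqP; lra.
Qed.

Lemma sum_p5 : \sum_j p5 j *m (alpha5 j)^T = 0.
Proof.
apply/matrixP => a b; rewrite summxE mxE.
under eq_bigr do rewrite !mxE big_ord1 !mxE.
by case: a => [[|[|//]] ?]; case: b => [[|[|//]] ?];
  rewrite !big_ord_recr big_ord0 /p5 /alpha5 /= !mxE /=; lra.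
Qed.

Lemma sum_q5 a b c : \sum_j q5 j a 0 * alpha5 j b 0 * alpha5 j c 0 = 0.
Proof.
by case: a => [[|[|//]] ?]; case: b => [[|[|//]] ?]; case: c => [[|[|//]] ?];
  rewrite !big_ord_recr big_ord0 /q5 /alpha5 /= !mxE /=; lra.
Qed.

Lemma blockA_X5 k : blockA (X5 k) = A5 k.
Proof.
apply/matrixP => a b; rewrite /X5 mxE tn_pointE mprime_dirEu.
under eq_bigr do rewrite mprime_dirEu.
by case: k => [[|[|[|[|[|//]]]]] ?]; case: a => [[|[|//]] ?]; case: b => [[|[|//]] ?];
  rewrite big_mkcond !big_ord_recr big_ord0 /A5 /p5 /alpha5 /kappa5 /= !mxE /=; lra.
Qed.

Lemma blockB_X5 k : blockB (X5 k) = B5 k.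
Proof.
apply/matrixP => a b; rewrite /X5 mxE tn_pointE mprime_dirEd.
under eq_bigr do rewrite mprime_dirEd.
by case: k => [[|[|[|[|[|//]]]]] ?]; case: a => [[|[|//]] ?]; case: b => [[|[|//]] ?];
  rewrite big_mkcond !big_ord_recr big_ord0 /B5 /q5 /alpha5 /delta5 /kappa5 /dot2 /=
    !sum_ord2 !mxE /=; lra.
Qed.

Lemma X5_ineq i j : i != j ->
  c5 i - c5 j + d5 i * \det (A5 i - A5 j) + frob (A5 i - A5 j) (B5 i *m Jmx R) < 0.
Proof.
rewrite det_mx22 frob_mulmxJ !mxE.
by case: i => [[|[|[|[|[|//]]]]] ?]; case: j => [[|[|[|[|[|//]]]]] ?] //=;
  rewrite /A5 /B5 /c5 /d5 /= !mxE /=; lra.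
Qed.

End Witness.

Theorem proposition2p1 :
  exists (X : 'I_5 -> mat42 Rdefinitions.R) (c d : 'I_5 -> Rdefinitions.R),
    in_Mprime X /\
    forall i j : 'I_5, i != j ->
      c i - c j + d i * \det (blockA (X i) - blockA (X j))
        + frob (blockA (X i) - blockA (X j)) (blockB (X i) *m Jmx _) < 0.
Proof.
exists (X5 _), (c5 _), (d5 _); split.
  rewrite /X5; apply: in_Mprime_tn_point => //;
    [exact: kappa5_gt1 | exact: alpha5_neq0 | exact: p5_neq0 |
     exact: alpha5_noncollinear | exact: sum_p5 | exact: sum_q5].
by move=> i j ij; rewrite !blockA_X5 blockB_X5; apply: X5_ineq.
Qed.
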